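(* Let $\mathcal{F}=(A,R)$ and $\mathcal{G}=(A,R')$ be argumentation frameworks with $R\subseteq R'$ and $\mathrm{conf}(\mathcal{F})=\mathrm{conf}(\mathcal{G})$, and let $S\in\mathit{tfcf2}(\mathcal{F})$. Then $S\in\mathit{tfcf2}(\mathcal{G})$. In particular, $\mathit{tfcf2}$ is both $\preceq^E_\cap$-skepticism adequate and $\preceq^E_W$-skepticism adequate.
   Context: An argumentation framework (AF) is $\mathcal{F}=(A_{\mathcal{F}},R_{\mathcal{F}})$ with $R_{\mathcal{F}}\subseteq A_{\mathcal{F}}\times A_{\mathcal{F}}$ (possibly infinite); $a\rightarrow b$ means $(a,b)\in R_{\mathcal{F}}$. $\mathrm{conf}(\mathcal{F})=\{(x,y):(x,y)\in R_{\mathcal{F}}\text{ or }(y,x)\in R_{\mathcal{F}}\}$. $\tau_1\preceq^E_\cap\tau_2$ iff $\bigcap_{S_1\in\tau_1}S_1\subseteq\bigcap_{S_2\in\tau_2}S_2$; $\tau_1\preceq^E_W\tau_2$ iff for every $S_2\in\tau_2$ there is $S_1\in\tau_1$ with $S_1\subseteq S_2$. A semantics $\sigma$ is $\preceq$-skepticism adequate if for any AFs $\mathcal{F},\mathcal{G}$ on the same argument set with $R_{\mathcal{F}}\supseteq R_{\mathcal{G}}$ and $\mathrm{conf}(\mathcal{F})=\mathrm{conf}(\mathcal{G})$, $\sigma(\mathcal{F})\preceq\sigma(\mathcal{G})$. $\mathcal{F}|_B=(A_{\mathcal{F}}\cap B,R_{\mathcal{F}}\cap(B\times B))$. Conflict-free: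 no $a,b\in S$ with $a\rightarrow b$; naive: $\subseteq$-maximal conflict-free. $\mathrm{SCC}(a)$: set of $b$ with directed attack paths (possibly of length 0) from $a$ to $b$ and back. $D_S(X)=\{b\in X:\exists a\in S\setminus X,\ a\rightarrow b\}$. $C^0_S(a)=\mathrm{SCC}(a)$; $C^{\alpha+1}_S(a)$ = component of $a$ in $\mathcal{F}|_{C^\alpha_S(a)\setminus D_S(C^\alpha_S(a))}$ (empty if $a$ not there); for limit $\lambda$, component of $a$ in $\mathcal{F}|_{\bigcap_{\alpha<\lambda}C^\alpha_S(a)}$; $\alpha_S(a)$ = least $\alpha$ with $a\notin C^\alpha_S(a)$ or $C^{\alpha+1}_S(a)=C^\alpha_S(a)$. $S\in\mathit{tfcf2}(\mathcal{F})$ iff $S$ is conflict-free and for each $a\in A_{\mathcal{F}}$, $a\notin C^{\alpha_S(a)}_S(a)$ or $S\cap C^{\alpha_S(a)}_S(a)$ is a naive extension of $\mathcal{F}|_{C^{\alpha_S(a)}_S(a)}$. *)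

(* An argumentation framework over a type A of arguments is
   given by its attack relation R : A -> A -> Prop (the argument set is the
   whole type A, possibly infinite). *)
From Stdlib Require Import Relations.

Set Implicit Arguments.

Section AF.
Variable A : Type.

Definition aset := A -> Prop.
Definition att := A -> A -> Prop.

Definition subset (X Y : aset) : Prop := forall x, X x -> Y x.
Definition same (X Y : aset) : Prop := forall x, X x <-> Y x.
Definition fullset : aset := fun _ => True.

Definition conf (R : att) : att := fun x y => R x y \/ R y x.

Definition restr (R : att) (B : aset) : att := fun x y => B x /\ B y /\ R x y.

Definition conflict_free (R : att) (S : aset) : Prop :=
  forall a b, S a -> S b -> ~ R a b.

Definition naive_in (R : att) (B : aset) (T : aset) : Prop :=
  subset T B /\ conflict_free (restr R B) T /\
  forall U, subset U B -> conflict_free (restr R B) U -> subset T U -> subset U T.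

Definition reach (R : att) (B : aset) : att := clos_refl_trans A (restr R B).

Definition comp (R : att) (B : aset) (a : A) : aset :=
  fun b => B a /\ reach R B a b /\ reach R B b a.

Definition SCC (R : att) (a : A) : aset := comp R fullset a.

Definition Dset (R : att) (S X : aset) : aset :=
  fun b => X b /\ exists c, S c /\ ~ X c /\ R c b.

Definition stepC (R : att) (S : aset) (a : A) (X : aset) : aset :=
  comp R (fun x => X x /\ ~ Dset R S X x) a.

Definition inter (P : aset -> Prop) : aset := fun x => forall Y, P Y -> Y x.

(* Since ordinals are
   not available, the transfinite sequence is generated inductively: initial
   stage SCC(a), successor stages, and "limit" stages = component of a in the
   restriction to the intersection of a family of earlier stages. *)
Inductive stage (R : att) (S : aset) (a : A) : aset -> Prop :=
| stage0 : stage R S a (SCC R a)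
| stageS : forall X, stage R S a X -> stage R S a (stepC R S a X)
| stageL : forall P : aset -> Prop, (forall Y, P Y -> stage R S a Y) ->
    stage R S a (comp R (inter P) a).

Definition terminal (R : att) (S : aset) (a : A) (X : aset) : Prop :=
  ~ X a \/ same (stepC R S a X) X.

(* X = C^{alpha_S(a)}_S(a): the terminal stage reached first (the stages
   decrease, so the first one is the largest one). *)
Definition alpha_stage (R : att) (S : aset) (a : A) (X : aset) : Prop :=
  stage R S a X /\ terminal R S a X /\
  forall Y, stage R S a Y -> terminal R S a Y -> subset Y X.

Definition tfcf2 (R : att) (S : aset) : Prop :=
  conflict_free R S /\
  forall a X, alpha_stage R S a X ->
    ~ X a \/ naive_in R X (fun x => S x /\ X x).

Definition le_cap (t1 t2 : aset -> Prop) : Prop :=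
  subset (inter t1) (inter t2).
Definition le_W (t1 t2 : aset -> Prop) : Prop :=
  forall S2, t2 S2 -> exists S1, t1 S1 /\ subset S1 S2.

Definition skept_adequate (sigma : att -> aset -> Prop)
  (le : (aset -> Prop) -> (aset -> Prop) -> Prop) : Prop :=
  forall RF RG : att, (forall x y, RG x y -> RF x y) ->
    (forall x y, conf RF x y <-> conf RG x y) -> le (sigma RF) (sigma RG).

End AF.

(** A set C is an S-unattacked SCC around a when C is strongly connected
    through a and no member of S outside C attacks C.  Such sets survive every
    step of the construction of the stages C^α_S(a), and a terminal stage
    containing a is one of them; so C^{α_S(a)}_S(a) is the largest S-unattacked
    SCC around a.

    Let S ∈ tfcf2(F), let X be the final component of a in G, and let x ∈ X
    conflict with no member of S ∩ X.  An S-attacker of x would lie in X, so x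
    survives in its own final component Z in F, where S ∩ Z is naive.  Since
    conf(F) = conf(G), Z enlarged by the members of S attacking it in G is an
    S-unattacked SCC of G; joined with X it is one around a, so Z ⊆ X.  Hence
    (S ∩ Z) ∪ {x} is conflict-free in F|_Z, and naivety of S ∩ Z gives x ∈ S. *)
From Stdlib Require Import Relations Classical.

Set Implicit Arguments.

Section Stages.
Variable A : Type.
Implicit Types (R : att A) (S B G X Y Z : aset A).

Lemma reach_mono R R' B B' x y :
  (forall u v, R u v -> R' u v) -> subset B B' ->
  reach R B x y -> reach R' B' x y.
Proof.
  intros HR HB H; unfold reach in *; induction H.
  - destruct H as [Bx [By Rxy]]; apply rt_step; repeat split; auto.
  - apply rt_refl.
  - eapply rt_trans; eauto.
Qed.

Lemma comp_subset R B a : subset (comp R B a) B.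
Proof.
  intros x [Ba [Hax _]]; unfold reach in Hax; induction Hax; auto.
  destruct H as [_ [By _]]; exact By.
Qed.

Definition unattacked_scc R S a G : Prop :=
  G a /\ (forall x, G x -> reach R G a x /\ reach R G x a) /\
  (forall d w, S d -> ~ G d -> G w -> ~ R d w).

Lemma unattacked_scc_attacker R S a G d w :
  unattacked_scc R S a G -> S d -> G w -> R d w -> G d.
Proof.
  intros [_ [_ Hclosed]] Sd Gw Rdw; apply NNPP; intro nGd.
  exact (Hclosed d w Sd nGd Gw Rdw).
Qed.

Lemma unattacked_scc_comp R S a G B :
  unattacked_scc R S a G -> subset G B -> subset G (comp R B a).
Proof.
  intros [Ga [Hreach _]] GB x Gx; destruct (Hreach x Gx) as [Hax Hxa].
  split; [auto | split; eapply reach_mono; eauto].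
Qed.

Lemma stage_contains_unattacked_scc R S a G Y :
  unattacked_scc R S a G -> stage R S a Y -> subset G Y.
Proof.
  intros HG HY; induction HY; apply (unattacked_scc_comp HG).
  - intros x _; exact I.
  - intros u Gu; split; [auto|].
    intros [_ [c [Sc [nXc Rcu]]]].
    destruct HG as [_ [_ Hclosed]]; apply (Hclosed c u); auto.
  - intros u Gu Y PY; apply H0; auto.
Qed.

Lemma terminal_unattacked_scc R S a X :
  terminal R S a X -> X a -> unattacked_scc R S a X.
Proof.
  intros [nXa | Hfix] Xa; [contradiction|].
  split; [exact Xa | split].
  - intros x Xx; apply Hfix in Xx; destruct Xx as [_ [Hax Hxa]].
    split; eapply reach_mono; eauto; intros u [Xu _]; exact Xu.
  - intros d w Sd nXd Xw Rdw; apply Hfix, comp_subset in Xw.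
    destruct Xw as [Xw nD]; apply nD; split; eauto.
Qed.

Lemma stage_root R S a Y x : stage R S a Y -> Y x -> Y a.
Proof.
  intros HY Yx; destruct HY; destruct Yx as [Ba _];
    (split; [exact Ba | split; apply rt_refl]).
Qed.

Definition least_stage R S a : aset A := comp R (inter (stage R S a)) a.

Lemma alpha_stage_least_stage R S a : alpha_stage R S a (least_stage R S a).
Proof.
  assert (Hstage : stage R S a (least_stage R S a)) by (apply stageL; auto).
  assert (Hleast : forall Y, stage R S a Y -> subset (least_stage R S a) Y).
  { intros Y HY x Hx; apply comp_subset in Hx; apply Hx, HY. }
  split; [exact Hstage | split].
  - right; intros x; split; intro Hx.
    + apply comp_subset in Hx; apply Hx.
    + apply (Hleast _ (stageS Hstage)); exact Hx.
  - intros Y HY Hterm x Yx.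
    assert (HgY : unattacked_scc R S a Y)
      by (apply terminal_unattacked_scc; [exact Hterm | eapply stage_root; eauto]).
    exact (stage_contains_unattacked_scc HgY Hstage x Yx).
Qed.

Lemma stage_root_or_attacked R S b Y :
  stage R S b Y -> Y b \/ exists c, S c /\ R c b.
Proof.
  intros HY; induction HY.
  - left; split; [exact I | split; apply rt_refl].
  - destruct IHHY as [Xb | Hatt]; [|right; exact Hatt].
    destruct (classic (Dset R S X b)) as [[_ [c [Sc [_ Rcb]]]] | nD].
    + right; eauto.
    + left; split; [split; auto | split; apply rt_refl].
  - destruct (classic (exists c, S c /\ R c b)) as [Hatt | nHatt];
      [right; exact Hatt|].
    left; split; [| split; apply rt_refl].
    intros Y PY; destruct (H0 Y PY) as [Yb | Hatt]; [exact Yb | contradiction].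
Qed.

Lemma unattacked_scc_union R S a b G1 G2 :
  unattacked_scc R S a G1 -> unattacked_scc R S b G2 -> G1 b ->
  unattacked_scc R S a (fun w => G1 w \/ G2 w).
Proof.
  intros [G1a [Hreach1 Hclosed1]] [_ [Hreach2 Hclosed2]] G1b.
  set (G := fun w => G1 w \/ G2 w).
  assert (Hreach1' : forall x y, reach R G1 x y -> reach R G x y)
    by (intros; eapply reach_mono; eauto; intros u Hu; left; exact Hu).
  assert (Hreach2' : forall x y, reach R G2 x y -> reach R G x y)
    by (intros; eapply reach_mono; eauto; intros u Hu; right; exact Hu).
  split; [left; exact G1a | split].
  - intros x [G1x | G2x].
    + destruct (Hreach1 x G1x) as [Hax Hxa]; auto.
    + destruct (Hreach1 b G1b) as [Hab Hba]; destruct (Hreach2 x G2x) as [Hbx Hxb].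
      split; [apply rt_trans with b | apply rt_trans with b];
        [apply Hreach1' | apply Hreach2' | apply Hreach2' | apply Hreach1']; assumption.
  - intros d w Sd nGd [G1w | G2w] Rdw.
    + apply (Hclosed1 d w Sd); auto; intro G1d; apply nGd; left; exact G1d.
    + apply (Hclosed2 d w Sd); auto; intro G2d; apply nGd; right; exact G2d.
Qed.

Lemma naive_in_extend R B T x :
  naive_in R B T -> B x -> ~ R x x -> (forall c, T c -> ~ conf R c x) -> T x.
Proof.
  intros [TB [cfT Hmax]] Bx nRxx Hnoconf.
  apply (Hmax (fun w => T w \/ w = x)); [| | intros w Tw; left; exact Tw | right; reflexivity].
  - intros w [Tw | ->]; auto.
  - intros u v [Tu | ->] [Tv | ->] Huv; destruct Huv as [_ [_ Ruv]].
    + apply (cfT u v Tu Tv); repeat split; auto.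
    + exact (Hnoconf u Tu (or_introl Ruv)).
    + exact (Hnoconf v Tv (or_intror Ruv)).
    + exact (nRxx Ruv).
Qed.

Lemma conflict_free_conf R R' S :
  (forall x y, conf R' x y -> conf R x y) -> conflict_free R S -> conflict_free R' S.
Proof.
  intros Hconf cfS x y Sx Sy Rxy.
  destruct (Hconf x y (or_introl Rxy)) as [Hxy | Hyx];
    [exact (cfS x y Sx Sy Hxy) | exact (cfS y x Sy Sx Hyx)].
Qed.

Section ConfPreserving.
Variables (R R' : att A) (S : aset A).
Hypothesis R_sub : forall x y, R x y -> R' x y.
Hypothesis conf_sub : forall x y, conf R' x y -> conf R x y.

Lemma unattacked_scc_conf b Z :
  conflict_free R' S -> unattacked_scc R S b Z ->
  unattacked_scc R' S b (fun w => Z w \/ S w /\ exists y, Z y /\ R' w y).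
Proof.
  intros cfS' HZ; set (N := fun w => Z w \/ S w /\ exists y, Z y /\ R' w y).
  assert (HreachZ : forall w, Z w -> reach R' N b w /\ reach R' N w b).
  { intros w Zw; destruct HZ as [_ [Hreach _]]; destruct (Hreach w Zw).
    split; eapply reach_mono; eauto; intros u Zu; left; exact Zu. }
  split; [left; apply HZ | split].
  - intros w [Zw | [Sw [y [Zy Rwy]]]]; [auto|].
    destruct (classic (Z w)) as [Zw | nZw]; [auto|].
    assert (Nw : N w) by (right; eauto).
    destruct (conf_sub (or_introl Rwy)) as [Rwy' | Ryw].
    + destruct HZ as [_ [_ Hclosed]]; destruct (Hclosed w y Sw nZw Zy Rwy').
    + destruct (HreachZ y Zy) as [Hby Hyb]; split.
      * apply rt_trans with y; [exact Hby|].
        apply rt_step; repeat split; [left; exact Zy | exact Nw | auto].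
      * apply rt_trans with y; [| exact Hyb].
        apply rt_step; repeat split; [exact Nw | left; exact Zy | exact Rwy].
  - intros d w Sd nNd [Zw | [Sw _]] Rdw.
    + apply nNd; right; eauto.
    + exact (cfS' d w Sd Sw Rdw).
Qed.

Lemma tfcf2_mem_of_unconflicted a X x :
  tfcf2 R S -> stage R' S a X -> unattacked_scc R' S a X -> X x -> ~ R' x x ->
  (forall c, S c -> X c -> ~ conf R' c x) -> S x.
Proof.
  intros [cfS HS] HX HgX Xx nRxx Hnoconf.
  pose proof (conflict_free_conf conf_sub cfS) as cfS'.
  pose proof (alpha_stage_least_stage R S x) as HZ.
  set (Z := least_stage R S x) in *.
  assert (Zx : Z x).
  { destruct (stage_root_or_attacked (proj1 HZ)) as [Zx | [c [Sc Rcx]]];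
      [exact Zx | exfalso].
    apply (Hnoconf c Sc); [eapply unattacked_scc_attacker; eauto | left; auto]. }
  assert (ZX : subset Z X).
  { assert (HgZ : unattacked_scc R S x Z)
      by (apply terminal_unattacked_scc; [apply HZ | exact Zx]).
    pose proof (unattacked_scc_union HgX (unattacked_scc_conf cfS' HgZ) Xx) as HgXZ.
    intros w Zw; apply (stage_contains_unattacked_scc HgXZ HX); right; left; exact Zw. }
  destruct (HS x Z HZ) as [nZx | Hnaive]; [contradiction|].
  enough (HSZ : S x /\ Z x) by exact (proj1 HSZ).
  apply (naive_in_extend Hnaive Zx).
  - intros Rxx; exact (nRxx (R_sub Rxx)).
  - intros c [Sc Zc] [Rcx | Rxc];
      apply (Hnoconf c Sc (ZX c Zc)); [left | right]; auto.
Qed.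

Lemma tfcf2_conf_preserving : tfcf2 R S -> tfcf2 R' S.
Proof.
  intros HS; pose proof (conflict_free_conf conf_sub (proj1 HS)) as cfS'.
  split; [exact cfS'|].
  intros a X [HX [Hterm _]].
  destruct (classic (X a)) as [Xa | nXa]; [right | left; exact nXa].
  pose proof (terminal_unattacked_scc Hterm Xa) as HgX.
  split; [intros x [_ Xx]; exact Xx | split].
  - intros x y [Sx _] [Sy _] [_ [_ Rxy]]; exact (cfS' x y Sx Sy Rxy).
  - intros U UX cfU SU x Ux; split; [| exact (UX x Ux)].
    apply (tfcf2_mem_of_unconflicted HS HX HgX (UX x Ux)).
    + intros Rxx; apply (cfU x x Ux Ux); repeat split; auto.
    + intros c Sc Xc Hconf; assert (Uc : U c) by (apply SU; split; assumption).
      destruct Hconf as [Rcx | Rxc];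
        [apply (cfU c x Uc Ux) | apply (cfU x c Ux Uc)]; repeat split; auto.
Qed.

End ConfPreserving.
End Stages.

Theorem theorem15 (A : Type) :
  (forall (R R' : att A) (S : aset A),
     (forall x y, R x y -> R' x y) ->
     (forall x y, conf R x y <-> conf R' x y) ->
     tfcf2 R S -> tfcf2 R' S)
  /\ skept_adequate (@tfcf2 A) (@le_cap A)
  /\ skept_adequate (@tfcf2 A) (@le_W A).
Proof.
  split; [| split].
  - intros R R' S Hsub Hconf; apply tfcf2_conf_preserving; [exact Hsub |].
    intros x y; apply Hconf.
  - intros RF RG HGF Hconf x Hx S HS; apply Hx.
    apply (tfcf2_conf_preserving (R := RG)); [exact HGF | apply Hconf | exact HS].
  - intros RF RG HGF Hconf S HS; exists S; split; [| intros x Sx; exact Sx].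
    apply (tfcf2_conf_preserving (R := RG)); [exact HGF | apply Hconf | exact HS].
Qed.
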